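(* Let $K$ be a finite simplicial complex, $f$ an injective filtration function on $K$, $n$ a positive integer, and $\alpha$ an $n$-cycle whose homology class $[\alpha]\in H_n(K^f_a)$ is born at $a$ and terminated at a finite value $b>a$. Let $D=(0,\frac{b-a}{2}]$ and let $\Sigma_\varepsilon$ and $\Pi_\varepsilon$ ($\varepsilon\in D$) be as defined in the context. Then for each $t\in D$ there exists $\delta>0$ such that $\Sigma_\varepsilon$ and $\Pi_\varepsilon$ are constant for $\varepsilon\in(t-\delta,t]\cap D$.
   Context: A filtration function on a finite simplicial complex $K$ is a map $f\colon K\to\mathbb{R}$ with $f(\sigma)\le f(\tau)$ whenever $\sigma$ is a face of $\tau$. Sublevel complexes are $K^f_r=f^{-1}((-\infty,r])$, with inclusions $K^f_q\subseteq K^f_r$ for $q\le r$; homology is taken with coefficients in a fixed field. For a nontrivial class $[\alpha]\in H_n(K^f_r)$, its birth is the infimum of $q\le r$ such that $[\alpha]$ is in the image of $H_n(K^f_q)\to H_n(K^f_r)$, and its termination scale is the infimum of $q\ge r$ such that $[\alpha]$ maps to $0$ in $H_n(K^f_q)$. $\|f-g\|_\infty=\max_{\sigma\in K}|f(\sigma)-g(\sigma)|$. An (injective) $\varepsilon$-perturbation of $f$ is an injective filtration function $g$ on $K$ with $\|f-g\|_\infty\le\varepsilon$. For such $g$, let $\Delta_{g,\alpha}$ denote the simplex $\tau$ of $K$ such that the cycle $\alpha$ is a boundary in $K^g_{g(\tau)}$ but not in $K^g_r$ for any $r<g(\tau)$ (the $(n+1)$-simplex of $K^g$ terminating $[\alpha]$).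 Define $\Sigma_\varepsilon=\{\Delta_{g,\alpha}: g \text{ an injective } \varepsilon\text{-perturbation of } f\}$. Let $\sigma_1,\ldots,\sigma_m$ be the $(n+1)$-dimensional simplices of $K$; each injective filtration function $g$ induces a linear ordering of $\{\sigma_1,\dots,\sigma_m\}$ (by increasing $g$-value), regarded as a permutation in $S_m$. Define $\Pi_\varepsilon$ as the set of all such permutations induced by injective $\varepsilon$-perturbations of $f$. *)

From HB Require Import structures.
From mathcomp Require Import all_boot all_order all_fingroup all_algebra.
From mathcomp Require Import reals.
Set Implicit Arguments. Unset Strict Implicit. Unset Printing Implicit Defensive.
Import Order.TTheory GRing.Theory Num.Theory.
Local Open Scope ring_scope.

Section Defs.
Variable V : finType.

Definition simplicial_complex (K : {set {set V}}) : Prop :=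
  forall s, s \in K -> s != set0 /\ (forall t : {set V}, t \subset s -> t != set0 -> t \in K).

Definition Kdim (K : {set {set V}}) (j : nat) : {set {set V}} :=
  [set s in K | #|s| == j.+1].

Variable R : realType.

Definition filtration (K : {set {set V}}) (f : {set V} -> R) : Prop :=
  forall s t, s \in K -> t \in K -> t \subset s -> f t <= f s.

Definition injective_on (K : {set {set V}}) (f : {set V} -> R) : Prop :=
  forall s t, s \in K -> t \in K -> f s = f t -> s = t.

Definition sublevel (K : {set {set V}}) (f : {set V} -> R) (r : R) : {set {set V}} :=
  [set s in K | f s <= r].

(* simplicial chains with coefficients in a field F, oriented by the
   enumeration order of V *)
Variable F : fieldType.
Definition chain := {ffun {set V} -> F}.

Definition incidence (s t : {set V}) : F :=
  if (t \subset s) && (#|s| == #|t|.+1) then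
    match [pick v in s :\: t] with
    | Some v => (-1) ^+ #|[set w in s | (enum_rank w < enum_rank v)%N]|
    | None => 0
    end
  else 0.

Definition bd (c : chain) : chain := [ffun t => \sum_s c s * incidence s t].

Definition supported_in (L : {set {set V}}) (k : nat) (c : chain) : Prop :=
  forall s, c s != 0 -> s \in Kdim L k.

Definition is_cycle (L : {set {set V}}) (k : nat) (c : chain) : Prop :=
  supported_in L k c /\ bd c = 0.

Definition is_boundary (L : {set {set V}}) (k : nat) (c : chain) : Prop :=
  exists d : chain, supported_in L k.+1 d /\ bd d = c.

(* [c] in H_k(Lr) lies in the image of H_k(Lq) -> H_k(Lr) *)
Definition in_image (Lq Lr : {set {set V}}) (k : nat) (c : chain) : Prop :=
  exists b : chain, is_cycle Lq k b /\ is_boundary Lr k (c - b).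

Definition is_inf (S : R -> Prop) (x : R) : Prop :=
  (forall y, S y -> x <= y) /\ (forall l, (forall y, S y -> l <= y) -> l <= x).

Definition born_at (K : {set {set V}}) (f : {set V} -> R) (k : nat) (alpha : chain) (a : R) : Prop :=
  is_inf (fun q => q <= a /\ in_image (sublevel K f q) (sublevel K f a) k alpha) a.

Definition terminates_at (K : {set {set V}}) (f : {set V} -> R) (k : nat) (alpha : chain) (a b : R) : Prop :=
  is_inf (fun q => a <= q /\ is_boundary (sublevel K f q) k alpha) b.

Definition perturbation (K : {set {set V}}) (f : {set V} -> R) (eps : R) (g : {set V} -> R) : Prop :=
  [/\ filtration K g, injective_on K g & forall s, s \in K -> `|f s - g s| <= eps].

Definition Delta (K : {set {set V}}) (g : {set V} -> R) (k : nat) (alpha : chain) (tau : {set V}) : Prop :=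
  [/\ tau \in K, is_boundary (sublevel K g (g tau)) k alpha &
      forall r, r < g tau -> ~ is_boundary (sublevel K g r) k alpha].

Definition Sigma (K : {set {set V}}) (f : {set V} -> R) (k : nat) (alpha : chain) (eps : R) (tau : {set V}) : Prop :=
  exists g, perturbation K f eps g /\ Delta K g k alpha tau.

(* the j-simplices sigma_1..sigma_m are indexed by enum_val : 'I_m -> {set V};
   p : 'S_m is the permutation induced by g, i.e. the i-th smallest
   j-simplex under g is sigma_{p i} *)
Definition induced_perm (K : {set {set V}}) (g : {set V} -> R) (j : nat) (p : 'S_#|Kdim K j|) : Prop :=
  forall i i' : 'I_#|Kdim K j|, (i < i')%N ->
    g (enum_val (p i)) < g (enum_val (p i')).

Definition Pi (K : {set {set V}}) (f : {set V} -> R) (k : nat) (eps : R) (p : 'S_#|Kdim K k.+1|) : Prop :=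
  exists g, perturbation K f eps g /\ @induced_perm K g k.+1 p.

End Defs.
Arguments Pi {V R} K f k eps p.
Arguments induced_perm {V R} K g j p.

(* Sigma_eps and Pi_eps only depend on which order types (the relations
   g u < g v on K) are realized by eps-perturbations of f.  The set of
   realized order types grows with eps, and it is open from below: pushing a
   perturbation g slightly towards f keeps its order type while making it an
   eps'-perturbation for some eps' < eps.  As there are finitely many order
   types, some delta > 0 works for all of them at once, so the realized order
   types, hence Sigma_eps and Pi_eps, are constant on (t - delta, t]. *)
From HB Require Import structures.
From mathcomp Require Import all_boot all_order all_fingroup all_algebra.
From mathcomp Require Import reals.
From mathcomp Require Import ring lra.
From Stdlib Require Import Classical.
Set Implicit Arguments. Unset Strict Implicit. Unset Printing Implicit Defensive.
Import Order.TTheory GRing.Theory Num.Theory.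
Local Open Scope ring_scope.

Section Near0.
Variable R : realType.

Lemma near0_forall (I : finType) (P : I -> R -> Prop) :
  (forall i, exists2 s0, 0 < s0 & forall s, 0 < s <= s0 -> P i s) ->
  exists2 s0, 0 < s0 & forall i s, 0 < s <= s0 -> P i s.
Proof.
move=> HP.
suff [s0 s0_gt0 Hs0] : exists2 s0, 0 < s0 &
    forall i, i \in enum I -> forall s, 0 < s <= s0 -> P i s.
  by exists s0 => // i; apply: Hs0; rewrite mem_enum.
elim: (enum I) => [|i l [s1 s1_gt0 IH]]; first by exists 1.
have [s2 s2_gt0 Hs2] := HP i.
exists (Order.min s1 s2); first by rewrite lt_min s1_gt0.
move=> j j_in s; rewrite le_min => /and3P[s_gt0 ss1 ss2].
move: j_in; rewrite inE => /orP[/eqP-> | jl].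
  by apply: Hs2; rewrite s_gt0.
by apply: IH => //; rewrite s_gt0.
Qed.

Lemma convex_lt_near0 (x y x' y' : R) : x < y ->
  exists2 s0, 0 < s0 &
    forall s, 0 < s <= s0 -> (1 - s) * x + s * x' < (1 - s) * y + s * y'.
Proof.
move=> lt_xy; set d := y - x; set c := (y' - x') - d.
have d_gt0 : 0 < d by rewrite subr_gt0.
have dc_gt0 : 0 < d + `|c| by have := normr_ge0 c; lra.
(* The gap between the two sides is d + s * c, which stays positive while s * |c| < d. *)
exists (d / (d + `|c|)); first by rewrite divr_gt0.
move=> s /andP[s_gt0 s_le].
have sdc : s * (d + `|c|) <= d by rewrite -ler_pdivlMr.
have sc : s * - `|c| <= s * c by rewrite ler_pM2l // lerNl -normrN ler_norm.
rewrite -subr_gt0.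
have -> : (1 - s) * y + s * y' - ((1 - s) * x + s * x') = d + s * c.
  by rewrite /c /d; ring.
nra.
Qed.

End Near0.

Section OrderType.
Variables (V : finType) (R : realType) (K : {set {set V}}).

Definition order_type (g : {set V} -> R) : {set {set V} * {set V}} :=
  [set p | [&& p.1 \in K, p.2 \in K & g p.1 < g p.2]].

Lemma order_typeP g g' : order_type g = order_type g' ->
  {in K &, forall u v, (g u < g v) = (g' u < g' v)}.
Proof.
move=> Egg' u v uK vK; have /setP/(_ (u, v)) := Egg'.
by rewrite !inE /= uK vK.
Qed.

Lemma order_type_le g g' : order_type g = order_type g' ->
  {in K &, forall u v, (g u <= g v) = (g' u <= g' v)}.
Proof. by move=> Egg' u v uK vK; rewrite !leNgt (order_typeP Egg'). Qed.

Lemma injective_on_order_type g g' : order_type g = order_type g' ->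
  injective_on K g -> injective_on K g'.
Proof.
move=> Egg' g_inj u v uK vK Eg'; apply: g_inj => //.
have := order_typeP Egg' uK vK; have := order_typeP Egg' vK uK.
by rewrite Eg' ltxx; case: ltgtP.
Qed.

Lemma is_boundary_subset (F : fieldType) (L L' : {set {set V}}) k (c : chain V F) :
  L \subset L' -> is_boundary L k c -> is_boundary L' k c.
Proof.
move=> /subsetP LL' [d [d_supp <-]]; exists d; split => // s /d_supp.
by rewrite !inE => /andP[/LL' -> ->].
Qed.

Lemma exists_sublevel_below (g : {set V} -> R) tau : exists2 r, r < g tau &
  [set s in K | g s < g tau] \subset sublevel K g r.
Proof.
pose r := \big[Order.max/(g tau - 1)]_(s | (s \in K) && (g s < g tau)) g s.
exists r; first by apply/bigmax_ltP; split => [|s /andP[]//]; rewrite gtrBl ltr01.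
apply/subsetP => s; rewrite !inE => /andP[sK lt_s].
by rewrite sK le_bigmax_cond ?sK.
Qed.

Lemma Delta_order_type (F : fieldType) g g' k (alpha : chain V F) tau :
  order_type g = order_type g' -> Delta K g k alpha tau -> Delta K g' k alpha tau.
Proof.
move=> Egg' [tauK bd_tau not_bd].
have sub_tau : sublevel K g' (g' tau) = sublevel K g (g tau).
  by apply/setP => s; rewrite !inE; case sK: (s \in K); rewrite // (order_type_le Egg').
split; rewrite ?sub_tau // => r lt_r bd_r.
have [r' lt_r' sub_r'] := exists_sublevel_below g tau.
apply: (not_bd r' lt_r'); apply: is_boundary_subset bd_r.
apply: subset_trans sub_r'; apply/subsetP => s; rewrite !inE => /andP[sK le_s].
by rewrite sK (order_typeP Egg') ?(le_lt_trans le_s).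
Qed.

Lemma induced_perm_order_type g g' j p : order_type g = order_type g' ->
  induced_perm K g j p -> induced_perm K g' j p.
Proof.
move=> Egg' Hp i i' lt_ii'.
have inK (x : 'I_#|Kdim K j|) : enum_val x \in K.
  by have := enum_valP x; rewrite inE => /andP[].
by rewrite -(order_typeP Egg') ?Hp.
Qed.

End OrderType.

Section Realizable.
Variables (V : finType) (R : realType) (K : {set {set V}}) (f : {set V} -> R).
Hypothesis f_filt : filtration K f.

Definition realizable (T : {set {set V} * {set V}}) (eps : R) : Prop :=
  exists g, perturbation K f eps g /\ order_type K g = T.

Lemma perturbation_le e e' g :
  e <= e' -> perturbation K f e g -> perturbation K f e' g.
Proof. by move=> le_ee' [? ? Hg]; split=> // s /Hg /le_trans; apply. Qed.

Lemma realizable_le T e e' : e <= e' -> realizable T e -> realizable T e'.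
Proof. by move=> le_ee' [g [Hg <-]]; exists g; split=> //; apply: perturbation_le Hg. Qed.

Lemma filtration_convex g s : 0 <= s <= 1 -> filtration K g ->
  filtration K (fun x => (1 - s) * g x + s * f x).
Proof.
move=> /andP[s_ge0 s_le1] g_filt u v uK vK vu.
by rewrite lerD // ler_wpM2l // ?subr_ge0 ?g_filt ?f_filt.
Qed.

Lemma order_type_convex_near0 g : injective_on K g ->
  exists2 s0, 0 < s0 & forall s, 0 < s <= s0 ->
    order_type K (fun x => (1 - s) * g x + s * f x) = order_type K g.
Proof.
move=> g_inj.
pose P (p : {set V} * {set V}) s :=
  g p.1 < g p.2 -> (1 - s) * g p.1 + s * f p.1 < (1 - s) * g p.2 + s * f p.2.
have /near0_forall [s0 s0_gt0 Hs0] :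
    forall p, exists2 s0, 0 < s0 & forall s, 0 < s <= s0 -> P p s.
  move=> [u v]; case: (ltP (g u) (g v)) => [lt_uv | le_vu].
    by have [s0 ? Hs0] := convex_lt_near0 (f u) (f v) lt_uv; exists s0 => // s /Hs0 lt _.
  by exists 1 => // s _; rewrite /P /= ltNge le_vu.
exists s0 => // s s_near; apply/setP => -[u v]; rewrite !inE /=.
case uK: (u \in K); case vK: (v \in K) => //=.
case: (ltgtP (g u) (g v)) => [lt_uv | lt_vu | Eg].
- exact: (Hs0 (u, v)).
- by apply/negbTE; rewrite -leNgt ltW // (Hs0 (v, u)).
- by rewrite (g_inj u v) ?ltxx.
Qed.

Lemma realizable_shrink T e : 0 < e -> realizable T e ->
  exists2 e', e' < e & realizable T e'.
Proof.
move=> e_gt0 [g [[g_filt g_inj g_near] <-]].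
have [s0 s0_gt0 Hs0] := order_type_convex_near0 g_inj.
set s := Order.min s0 1.
have s_gt0 : 0 < s by rewrite lt_min s0_gt0 ltr01.
have s_le1 : s <= 1 by rewrite ge_min lexx orbT.
have /Hs0 Etype : 0 < s <= s0 by rewrite s_gt0 ge_min lexx.
exists ((1 - s) * e); first by nra.
exists (fun x => (1 - s) * g x + s * f x); split=> //; split.
- by apply: filtration_convex; rewrite // ltW.
- exact: injective_on_order_type (esym Etype) g_inj.
- move=> x xK; have -> : f x - ((1 - s) * g x + s * f x) = (1 - s) * (f x - g x) by ring.
  by rewrite normrM ger0_norm ?subr_ge0 // ler_wpM2l ?subr_ge0 ?g_near.
Qed.

Lemma realizable_locally_constant t : 0 < t -> exists2 delta, 0 < delta &
  forall T e, t - delta < e <= t -> realizable T e <-> realizable T t.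
Proof.
move=> t_gt0.
pose P T d := realizable T t -> realizable T (t - d).
have /near0_forall [d d_gt0 Hd] :
    forall T, exists2 d, 0 < d & forall s, 0 < s <= d -> P T s.
  move=> T; have [HT | nHT] := classic (realizable T t); last by exists 1 => // s _ /nHT.
  have [e' lt_e' He'] := realizable_shrink t_gt0 HT.
  exists (t - e') => [|s /andP[_ le_s] _]; first by rewrite subr_gt0.
  by apply: realizable_le He'; lra.
have shift_t T : realizable T t -> realizable T (t - d) by apply: Hd; rewrite d_gt0 lexx.
exists d => // T e /andP[lt_e le_e]; split; first exact: realizable_le.
by move=> /shift_t; apply: realizable_le; apply: ltW.
Qed.

Lemma exists_perturbation_order_invariant (P : ({set V} -> R) -> Prop) e e' :
  (forall g g', order_type K g = order_type K g' -> P g -> P g') ->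
  (forall T, realizable T e -> realizable T e') ->
  (exists g, perturbation K f e g /\ P g) -> exists g, perturbation K f e' g /\ P g.
Proof.
move=> P_inv ee' [g [Hg Pg]].
have [g' [Hg' Eg]] := ee' _ (ex_intro _ g (conj Hg erefl)).
by exists g'; split=> //; apply: P_inv Pg.
Qed.

End Realizable.

Theorem lemma3p1 (V : finType) (R : realType) (F : fieldType)
  (K : {set {set V}}) (f : {set V} -> R) (n : nat) (alpha : chain V F) (a b : R) :
  simplicial_complex K -> filtration K f -> injective_on K f -> (0 < n)%N ->
  is_cycle (sublevel K f a) n alpha -> ~ is_boundary (sublevel K f a) n alpha ->
  born_at K f n alpha a -> terminates_at K f n alpha a b -> a < b ->
  forall t : R, 0 < t <= (b - a) / 2 ->
  exists delta : R, 0 < delta /\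
    forall e e' : R,
      t - delta < e <= t -> 0 < e <= (b - a) / 2 ->
      t - delta < e' <= t -> 0 < e' <= (b - a) / 2 ->
      (forall tau, Sigma K f n alpha e tau <-> Sigma K f n alpha e' tau) /\
      (forall p, Pi K f n e p <-> Pi K f n e' p).
Proof.
move=> _ f_filt _ _ _ _ _ _ _ t /andP[t_gt0 _].
have [d d_gt0 Hd] := realizable_locally_constant f_filt t_gt0.
exists d; split=> // e e' He _ He' _.
have ee' T : realizable K f T e -> realizable K f T e'.
  by move=> /(Hd T e He) /(Hd T e' He').
have e'e T : realizable K f T e' -> realizable K f T e.
  by move=> /(Hd T e' He') /(Hd T e He).
split=> x; split; apply: exists_perturbation_order_invariant => // g g';
  [exact: Delta_order_type | exact: Delta_order_type
  | exact: induced_perm_order_type | exact: induced_perm_order_type].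
Qed.
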